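(* Let $p$ be a prime, let $\alpha$ be a nonnegative integer, and let $G$ be a finite $p$-group of order $p^{\alpha+1}$ having a cyclic subgroup of order $p^{\alpha}$. Then $n_G=\exp(G)$ if and only if either $G$ is cyclic, or $\exp(G)=p$, or ($p=2$ and) $G\cong D_{2^{\alpha+1}}=\langle x,y \mid x^{2^{\alpha}}=y^2=1,\ x^y=x^{-1}\rangle$.
   Context: For a finite group $G$ and $x\in G$, let $I_{\mathcal C}(x)=\{y\in G : \langle x,y\rangle \text{ is cyclic}\}$. For a nontrivial finite group $G$, $n_G=\max\{|I_{\mathcal C}(x)| : x\in G\setminus\{1\}\}$. $\exp(G)$ denotes the exponent of $G$. *)

From mathcomp Require Import all_boot all_order all_fingroup all_solvable.
Set Implicit Arguments. Unset Strict Implicit. Unset Printing Implicit Defensive.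
Local Open Scope group_scope.

Definition I_C (gT : finGroupType) (G : {set gT}) (x : gT) : {set gT} :=
  [set y in G | cyclic <<[set x; y]>>].

Definition n_G (gT : finGroupType) (G : {set gT}) : nat :=
  \max_(x in G^#) #|I_C G x|.

From mathcomp Require Import all_boot all_order all_fingroup all_solvable.
Set Implicit Arguments.
Unset Strict Implicit.
Unset Printing Implicit Defensive.
Local Open Scope group_scope.

(* In a p-group the exponent is the order of some x, and <[x]> lies in I_C(x),
   so exponent G <= n_G.  The reverse bound is immediate for cyclic groups and
   groups of prime exponent; in a dihedral group I_C(x) lies in the rotation
   subgroup or in {1, x}.
   Conversely, let <[c]> have index p and n_G <= #[c].  Then I_C(x) = <[c]> for
   every x != 1 in <[c]>, so each y outside <[c]> meets <[c]> trivially and has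
   order p.  For p = 2 the involutions y and c y force c ^ y = c^-1.  For odd p
   and d in <[c]> of order p^2, [d, y] is central of order dividing p, so
   (y d)^p = y^p d^p = d^p != 1, contradicting #[y d] = p. *)

Lemma cycle_sub_expg2 (gT : finGroupType) (w : gT) :
  w ^+ 2 = 1 -> <[w]> \subset [set 1; w].
Proof.
move=> w2; apply/subsetP=> _ /cycleP[k ->]; rewrite -(expg_mod k w2).
have : k %% 2 < 2 by rewrite ltn_mod.
by case: (k %% 2) => [|[|]] // _; rewrite !inE eqxx ?orbT.
Qed.

Section CyclicInclusionSets.

Variables (gT : finGroupType) (G : {group gT}).

Lemma I_C_sub x : I_C G x \subset G.
Proof. by apply/subsetP=> y; rewrite inE => /andP[]. Qed.

Lemma cycle_sub_I_C c x : c \in G -> x \in <[c]> -> <[c]> \subset I_C G x.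
Proof.
move=> Gc xc; apply/subsetP=> y yc.
rewrite inE (subsetP _ y yc) ?cycle_subG //=.
by apply: cyclicS (cycle_cyclic c); rewrite gen_subG subUset !sub1set xc yc.
Qed.

Lemma I_C_cycle_witness x y : x \in G -> y \in I_C G x ->
  exists2 w, w \in G & (x \in <[w]>) && (y \in <[w]>).
Proof.
rewrite inE => Gx /andP[Gy /cyclicP[w defH]].
have Hw : w \in <<[set x; y]>> by rewrite defH cycle_id.
exists w; last by rewrite -defH !mem_gen // !inE eqxx ?orbT.
by apply: subsetP Hw; rewrite gen_subG subUset !sub1set Gx Gy.
Qed.

Lemma leq_card_I_C_nG x : x \in G^# -> #|I_C G x| <= n_G G.
Proof. exact: leq_bigmax_cond. Qed.

Lemma nG_leq m : (forall x, x \in G^# -> #|I_C G x| <= m) -> n_G G <= m.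
Proof. by move/bigmax_leqP. Qed.

Lemma leq_order_nG x : x \in G^# -> #[x] <= n_G G.
Proof.
move=> Gx; apply: leq_trans (leq_card_I_C_nG Gx).
case/setD1P: Gx => _ Gx.
by rewrite orderE subset_leq_card ?cycle_sub_I_C ?cycle_id.
Qed.

Lemma exponent_gt1 : G :!=: 1 -> 1 < exponent G.
Proof.
move=> ntG; rewrite ltn_neqAle exponent_gt0 andbT eq_sym.
by rewrite -dvdn1 -trivg_exponent.
Qed.

Lemma exponent_leq_nG : nilpotent G -> G :!=: 1 -> exponent G <= n_G G.
Proof.
move=> nilG /exponent_gt1; have [x Gx ->] := exponent_witness nilG.
by rewrite order_gt1 => x1; apply: leq_order_nG; rewrite !inE x1.
Qed.

Lemma nG_cyclic : cyclic G -> G :!=: 1 -> n_G G = exponent G.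
Proof.
move=> cG ntG; apply/eqP; rewrite eqn_leq exponent_cyclic // nG_leq /=.
  by rewrite -exponent_cyclic // exponent_leq_nG ?abelian_nil ?cyclic_abelian.
by move=> x _; rewrite subset_leq_card ?I_C_sub.
Qed.

Lemma nG_exponent_prime p : prime p -> exponent G = p -> n_G G = p.
Proof.
move=> p_pr eG; have ox x : x \in G^# -> #[x] = p.
  case/setD1P=> x1 Gx; apply/prime_nt_dvdP; rewrite ?order_eq1 //.
  by rewrite -eG dvdn_exponent.
have [G1 | /trivgPn[x0 Gx0 x01]] := eqsVneq G 1.
  by rewrite -eG G1 exponent1 in p_pr.
apply/eqP; rewrite eqn_leq; apply/andP; split; last first.
  by rewrite -(ox x0) ?leq_order_nG // !inE x01.
apply: nG_leq => x /[dup] /ox ox_p /setD1P[_ Gx].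
rewrite -ox_p orderE subset_leq_card //.
apply/subsetP=> y /(I_C_cycle_witness Gx)[w Gw /andP[xw yw]].
suff -> : <[x]> = <[w]> by [].
apply/eqP; rewrite eqEcard cycle_subG xw -!orderE ox_p -eG.
by rewrite dvdn_leq ?exponent_gt0 ?dvdn_exponent.
Qed.

Lemma nG_leq_involutions_outside (X : {group gT}) :
  {in G :\: X, forall g, g ^+ 2 = 1} -> n_G G <= maxn #|X| 2.
Proof.
move=> invo; apply: nG_leq => g /setD1P[g1 Gg].
have sIX : I_C G g \subset (if g \in X then X : {set gT} else [set 1; g]).
  apply/subsetP=> h /(I_C_cycle_witness Gg)[w Gw /andP[gw hw]].
  have [Xw | nXw] := boolP (w \in X).
    have /subsetP sWX : <[w]> \subset X by rewrite cycle_subG.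
    by rewrite (sWX g gw) (sWX h hw).
  have /subsetP sW1 : <[w]> \subset [set 1; w].
    by apply: cycle_sub_expg2; rewrite invo // inE nXw.
  have -> : g = w by move: (sW1 g gw); rewrite !inE (negPf g1) => /eqP.
  by rewrite (negPf nXw) sW1.
apply: leq_trans (subset_leq_card sIX) _.
case: ifP => _; first by rewrite leq_maxl.
by rewrite leq_max cards2; case: (1 != g); rewrite orbT.
Qed.

End CyclicInclusionSets.

Lemma dihedral_involutions_outside (gT : finGroupType) (G : {group gT}) x y :
    <[x]> <*> <[y]> = G -> y ^+ 2 = 1 -> x ^ y = x^-1 ->
  {in G :\: <[x]>, forall g, g ^+ 2 = 1}.
Proof.
move=> defG y2 xy g /setDP[]; have nXy : <[y]> \subset 'N(<[x]>).
  by rewrite cycle_subG; apply/normP; rewrite -cycleJ xy cycleV.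
rewrite -defG norm_joinEr // => /mulsgP[_ b /cycleP[i ->] yb ->].
have /subsetP/(_ b yb) := cycle_sub_expg2 y2; rewrite !inE.
case/pred2P=> ->; first by rewrite mulg1 mem_cycle.
have yV : y^-1 = y by apply/eqP; rewrite eq_invg_mul -[y * y]/(y ^+ 2) y2.
have xiy : (x ^+ i) ^ y = (x ^+ i)^-1 by rewrite conjXg xy expgVn.
by move=> _; rewrite expgS expg1 -mulgA -{1}yV -/(conjg _ _) xiy mulgV.
Qed.

Lemma nG_leq_dihedral (gT : finGroupType) (G : {group gT}) x y :
    <[x]> <*> <[y]> = G -> y ^+ 2 = 1 -> x ^ y = x^-1 -> G :!=: 1 ->
  n_G G <= exponent G.
Proof.
move=> defG y2 xy ntG; have invo := dihedral_involutions_outside defG y2 xy.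
apply: leq_trans (nG_leq_involutions_outside invo) _.
rewrite geq_max exponent_gt1 // -orderE dvdn_leq ?exponent_gt0 //.
by rewrite dvdn_exponent // -cycle_subG -defG joing_subl.
Qed.

Lemma exponent_index_prime_cycle (gT : finGroupType) (G : {group gT}) p c :
    prime p -> nilpotent G -> c \in G -> #|G| = (p * #[c])%N -> ~~ cyclic G ->
  exponent G = #[c].
Proof.
move=> p_pr nilG Gc oG; apply: contraNeq => eGc.
have /dvdnP[k eG] := dvdn_exponent Gc.
have /primeP[_ p_div] := p_pr.
have : k %| p by rewrite -(dvdn_pmul2r (order_gt0 c)) -eG -oG exponent_dvdn.
case/p_div/pred2P=> k_val; first by rewrite eG k_val mul1n eqxx in eGc.
have [x Gx ex] := exponent_witness nilG; apply/cyclicP; exists x.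
apply/eqP; rewrite eq_sym eqEcard cycle_subG Gx -orderE -ex eG k_val.
by rewrite oG mulnC leqnn.
Qed.

Lemma pgroup_normal_central (gT : finGroupType) p (G H : {group gT}) :
  prime p -> p.-group G -> H <| G -> #|H| %| p -> H \subset 'Z(G).
Proof.
move=> p_pr pG nsHG oH; have [-> | ntH] := eqsVneq H 1; first exact: sub1G.
have pr_H : prime #|H|.
  by rewrite (elimT (prime_nt_dvdP p_pr _) oH) // gtn_eqF // cardG_gt1.
apply: contraR (meet_center_nil (pgroup_nil pG) nsHG ntH) => nZH.
by rewrite prime_TIg.
Qed.

Lemma card_commg_normal_p2 (gT : finGroupType) p (G H : {group gT}) :
  prime p -> p.-group G -> H <| G -> #|H| = (p ^ 2)%N -> #|[~: H, G]| %| p.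
Proof.
move=> p_pr pG nsHG oH; have ntH : H :!=: 1.
  by rewrite -cardG_gt1 oH (ltn_exp2l 0) ?prime_gt1.
have ltKH : [~: H, G] \proper H.
  apply: nil_comm_properl (pgroup_nil pG) (normal_sub nsHG) ntH _.
  by rewrite subsetI subxx normal_norm.
have /(dvdn_pfactor _ _ p_pr)[[|[|[|m]]] // _ oK] : #|[~: H, G]| %| p ^ 2.
- by rewrite -oH cardSg ?proper_sub.
- by rewrite oK dvd1n.
- by rewrite oK.
by move: (proper_card ltKH); rewrite oK oH ltnn.
Qed.

Lemma expMg_prime_central_comm (gT : finGroupType) (x y : gT) p :
    prime p -> 2 < p -> commute x [~ x, y] -> commute y [~ x, y] ->
    [~ x, y] ^+ p = 1 ->
  (y * x) ^+ p = y ^+ p * x ^+ p.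
Proof.
move=> p_pr p_gt2 cxu cyu up; rewrite expMg_Rmul //.
have /dvdnP[k ->] : p %| 'C(p, 2) by rewrite prime_dvd_bin ?p_gt2.
by rewrite mulnC expgM up expg1n mulg1.
Qed.

Section IndexPrimeCyclicSubgroup.

Variables (gT : finGroupType) (p : nat) (G : {group gT}) (c : gT).
Hypotheses (p_pr : prime p) (pG : p.-group G) (Gc : c \in G).
Hypotheses (oG : #|G| = (p * #[c])%N) (nG_c : n_G G <= #[c]).

Lemma I_C_cycle x : x \in <[c]> -> x != 1 -> I_C G x = <[c]>.
Proof.
move=> cx x1; apply/esym/eqP; rewrite eqEcard cycle_sub_I_C // -orderE.
rewrite (leq_trans _ nG_c) // leq_card_I_C_nG // !inE x1.
by rewrite (subsetP _ x cx) // cycle_subG.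
Qed.

Lemma cycle_TI_notin g : g \in G -> g \notin <[c]> -> <[g]> :&: <[c]> = 1.
Proof.
move=> Gg nCg; apply/trivgP/subsetP=> w /setIP[gw cw]; rewrite inE.
apply: contraR nCg => w1; rewrite -(I_C_cycle cw w1) inE Gg.
apply: cyclicS (cycle_cyclic g).
by rewrite gen_subG subUset !sub1set gw cycle_id.
Qed.

Lemma order_notin_cycle g : g \in G -> g \notin <[c]> -> #[g] = p.
Proof.
move=> Gg nCg; have le_gp : #[g] <= p.
  rewrite -(leq_pmul2r (order_gt0 c)) -oG [#[g]]orderE [#[c]]orderE.
  rewrite -TI_cardMg ?cycle_TI_notin //.
  by rewrite subset_leq_card // mul_subG ?cycle_subG.
have [[|[|k]] og] := p_natP (mem_p_elt pG Gg).
- by move/eqP: og; rewrite order_eq1 => /eqP g1; rewrite g1 group1 in nCg.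
- by rewrite og expn1.
- by move: le_gp; rewrite og -{2}(expn1 p) leq_exp2l ?prime_gt1.
Qed.

Lemma cycle_proper : <[c]> \proper G.
Proof.
by rewrite properEcard cycle_subG Gc -orderE oG ltn_Pmull ?prime_gt1 ?order_gt0.
Qed.

Lemma joing_cycle_notin y : y \in G -> y \notin <[c]> -> <[c]> <*> <[y]> = G.
Proof.
move=> Gy nCy; apply/eqP; rewrite eqEcard join_subG !cycle_subG Gc Gy /= oG.
apply: leq_trans (subset_leq_card (mul_subG (joing_subl _ _) (joing_subr _ _))).
rewrite TI_cardMg 1?setIC ?cycle_TI_notin //.
by rewrite -!orderE (order_notin_cycle Gy) // mulnC.
Qed.

Lemma index_prime_cycle_prime_eq2 : p ^ 2 %| #[c] -> p = 2.
Proof.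
case/dvdnP=> q oc; apply/eqP; apply: contraT => p_ne2.
have p_gt2 : 2 < p by rewrite ltn_neqAle eq_sym p_ne2 prime_gt1.
have [_ [y Gy nCy]] := properP cycle_proper.
have q_gt0 : 0 < q by move: (order_gt0 c); rewrite oc muln_gt0 => /andP[].
pose d := c ^+ q; have od : #[d] = (p ^ 2)%N.
  by rewrite orderXdiv oc ?dvdn_mulr // mulKn.
have Gd : d \in G by rewrite groupX.
have nsCG : <[c]> <| G.
  apply: p_maximal_normal pG (p_index_maximal (proper_sub cycle_proper) _).
  by rewrite -divgS ?proper_sub ?cycle_proper // oG -orderE mulnK ?order_gt0.
have nsDG : <[d]> <| G.
  rewrite (char_normal_trans _ nsCG) // cycle_subgroup_char //.
  by rewrite cycle_subG mem_cycle.
have oK : #|[~: <[d]>, G]| %| p.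
  by rewrite (card_commg_normal_p2 p_pr pG) -?orderE.
have nsKG : [~: <[d]>, G] <| G.
  by rewrite -{2}(joing_idPr (normal_sub nsDG)) commg_normal.
pose u := [~ d, y].
have Ku : u \in [~: <[d]>, G] by rewrite mem_commg ?cycle_id.
have /centerP[_ cGu] := subsetP (pgroup_normal_central p_pr pG nsKG oK) u Ku.
have up : u ^+ p = 1.
  by apply/eqP; rewrite -order_dvdn (dvdn_trans (order_dvdG Ku)).
have nCyd : y * d \notin <[c]> by rewrite groupMr ?mem_cycle.
have yp : y ^+ p = 1 by rewrite -(order_notin_cycle Gy nCy) expg_order.
have ydp : (y * d) ^+ p = 1.
  by rewrite -(order_notin_cycle _ nCyd) ?groupM ?expg_order.
have := expMg_prime_central_comm p_pr p_gt2
  (commute_sym (cGu d Gd)) (commute_sym (cGu y Gy)) up.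
rewrite ydp yp mul1g => /esym/eqP; rewrite -order_dvdn od.
by rewrite -[p in _ %| p]expn1 dvdn_Pexp2l // prime_gt1.
Qed.

Lemma dihedral_generators : p = 2 ->
  exists y, [/\ <[c]> <*> <[y]> = G, y ^+ 2 = 1 & c ^ y = c^-1].
Proof.
move=> p2; have [_ [y Gy nCy]] := properP cycle_proper.
have inv g : g \in G -> g \notin <[c]> -> g ^+ 2 = 1.
  by move=> Gg nCg; rewrite -p2 -(order_notin_cycle Gg nCg) expg_order.
have y2 := inv y Gy nCy.
have cy2 : (c * y) ^+ 2 = 1.
  by apply: inv; [exact: groupM | rewrite groupMl ?cycle_id].
exists y; split; rewrite ?joing_cycle_notin //.
have yV : y^-1 = y by apply/eqP; rewrite eq_invg_mul -[y * y]/(y ^+ 2) y2.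
by apply: (mulgI c); rewrite /conjg yV mulgV mulgA.
Qed.

End IndexPrimeCyclicSubgroup.

Lemma isog_Grp_2dihedral (gT : finGroupType) (G : {group gT}) a b n :
    0 < n -> #|G| = (2 ^ n.+1)%N -> #[a] = (2 ^ n)%N ->
    <[a]> <*> <[b]> = G -> b ^+ 2 = 1 -> a ^ b = a^-1 ->
  G \isog Grp (x : y : (x ^+ (2 ^ n), y ^+ 2, x ^ y = x^-1)).
Proof.
move=> n_gt0 oG oa defG b2 ab; have D := @Grp_2dihedral n.+1 n_gt0.
apply: (isoGrp_trans _ D); apply/(isoGrpP _ D); split.
  by rewrite card_2dihedral.
apply/existsP; exists (a, b); rewrite /= !xpair_eqE /=.
by rewrite defG b2 ab -oa expg_order !eqxx.
Qed.

Theorem proposition2p7 (gT : finGroupType) (G : {group gT}) (p alpha : nat) :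
  prime p ->
  #|G| = (p ^ alpha.+1)%N ->
  (exists2 C : {group gT}, C \subset G & cyclic C /\ #|C| = (p ^ alpha)%N) ->
  (n_G G = exponent G <->
     [\/ cyclic G,
         exponent G = p
       | p = 2 /\
         G \isog Grp (x : y : (x ^+ (2 ^ alpha), y ^+ 2, x ^ y = x^-1))]).
Proof.
move=> p_pr oG [C sCG [cC oC]].
have pG : p.-group G by rewrite /pgroup oG pnatX pnat_id.
have ntG : G :!=: 1 by rewrite -cardG_gt1 oG (ltn_exp2l 0) ?prime_gt1.
have [c defC] := cyclicP cC.
have Gc : c \in G by rewrite -cycle_subG -defC.
have oc : #[c] = (p ^ alpha)%N by rewrite orderE -defC.
have oGc : #|G| = (p * #[c])%N by rewrite oG oc expnS.
split=> [nGe | [cG | eG | [p2 isoG]]].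
- have [cG | ncG] := boolP (cyclic G); first exact: Or31.
  have eG := exponent_index_prime_cycle p_pr (pgroup_nil pG) Gc oGc ncG.
  have nG_c : n_G G <= #[c] by rewrite nGe eG.
  case: alpha oG oc oC => [|[|k]] oG oc _.
  + by rewrite prime_cyclic ?oG in ncG.
  + by apply: Or32; rewrite eG oc.
  have p2 : p = 2.
    apply: (index_prime_cycle_prime_eq2 p_pr pG Gc oGc nG_c).
    by rewrite oc dvdn_exp2l.
  have [y [defG y2 cy]] := dihedral_generators p_pr pG Gc oGc nG_c p2.
  apply: Or33; split=> //.
  by apply: isog_Grp_2dihedral defG y2 cy; rewrite -?p2.
- exact: nG_cyclic.
- by rewrite eG (nG_exponent_prime p_pr).
case/existsP: (isoGrp_hom isoG) => -[x y] /=; rewrite !xpair_eqE.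
case/and4P=> /eqP defG _ /eqP y2 /eqP xy.
apply/eqP; rewrite eqn_leq exponent_leq_nG ?(pgroup_nil pG) // andbT.
exact: nG_leq_dihedral defG y2 xy ntG.
Qed.
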